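(* For real $u,w$ and an integer $n\ge 1$ let $g_n(u,w):=\sum_{i=1}^n i\,w^{i-1}u^{n-i}$. Then for every even integer $n\ge 6$, $$g_n(u,w)=(u^{n-1}+w^{n-1})+2u^{n-2}w+\sum_{i=1}^{(n-4)/2}u^{2i}w^{n-1-2i}+(u+w)\sum_{i=0}^{(n-4)/2}(n-1-2i)u^{2i}w^{n-2-2i}.$$ Furthermore, let $\beta>0$, $k>0$, and let $\delta$ be the involution defined in the context, $w=\delta(u)$. Then for all even integers $n\ge 2$: (i) if $-k<u_0<0$, then $g_n(u,w)<0$ for all $u\in(0,u_1)$; (ii) if $u_0<-k$, then $g_n(w,u)>0$ for all $u\in(0,k)$.
   Context: $\Phi(u)=\beta\left(-\frac{u^4}{4}+\frac{k+u_0}{3}u^3-\frac{ku_0}{2}u^2\right)$. Case $-k<u_0<0$: $u_1$ is the unique point of $(0,k)$ with $\Phi(u_1)=\Phi(u_0)$, and for $u\in(0,u_1)$, $\delta(u)$ is the unique $w\in(u_0,0)$ with $\Phi(w)=\Phi(u)$. Case $u_0<-k$: $w_2$ is the unique point of $(u_0,0)$ with $\Phi(w_2)=\Phi(k)$, and for $u\in(0,k)$, $\delta(u)$ is the unique $w\in(w_2,0)$ with $\Phi(w)=\Phi(u)$. *)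

From mathcomp Require Import all_boot all_order all_algebra.
From mathcomp Require Import reals.
Set Implicit Arguments. Unset Strict Implicit. Unset Printing Implicit Defensive.
Import Order.TTheory GRing.Theory Num.Theory.
Local Open Scope ring_scope.

Definition g {R : realType} (n : nat) (u w : R) : R :=
  \sum_(1 <= i < n.+1) i%:R * w ^+ (i - 1) * u ^+ (n - i).

Definition Phi {R : realType} (beta k u0 u : R) : R :=
  beta * (- (u ^+ 4) / 4%:R + (k + u0) / 3%:R * u ^+ 3 - k * u0 / 2%:R * u ^+ 2).

From mathcomp Require Import all_boot all_order all_algebra.
From mathcomp Require Import reals.
From mathcomp Require Import ring lra zify.
Import Order.TTheory GRing.Theory Num.Theory.
Local Open Scope ring_scope.

(* Since g_n(a, .) is the derivative of the geometric sum (w^(n+1) - a^(n+1)) / (w - a),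
   (w - a)^2 g_n(a, w) = n w^(n+1) - (n+1) a w^n + a^(n+1); for even n and 0 < a <= b
   this is negative at w = -b, so g_n(a, -b) < 0.  Both sign claims thus reduce to
   comparing u with |w|.  As Phi' = beta x (k - x) (x - u0), Phi increases on [0, k] and
   decreases on [u0, 0], while Phi(u) - Phi(-u) = 2 beta (k + u0) u^3 / 3 has the sign
   of k + u0.  For -k < u0 this gives first u < -u0 (from Phi(u1) = Phi(u0) < Phi(-u0)),
   then Phi(-u) < Phi(u) = Phi(w), so w < -u; for u0 < -k the comparison reverses,
   -w < u, and g_n(w, u) = -g_n(-w, -u) for even n.  The expansion of g_n follows by
   induction from g_(n+2) = u^2 g_n + (n+1) u w^n + (n+2) w^(n+1). *)

Section GExpansion.
Context {R : realType}.
Implicit Types (u w a b : R).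

Lemma g0 u w : g 0 u w = 0.
Proof. by rewrite /g big_geq. Qed.

Lemma gS n u w : g n.+1 u w = u * g n u w + n.+1%:R * w ^+ n.
Proof.
rewrite /g big_nat_recr //= subSS subn0 subnn expr0 mulr1; congr (_ + _).
rewrite mulr_sumr; apply: eq_big_nat => i /andP[_ ltin].
by rewrite subSn -1?ltnS // exprS mulrCA.
Qed.

Lemma gSS n u w :
  g n.+2 u w = u ^+ 2 * g n u w + n.+1%:R * u * w ^+ n + n.+2%:R * w ^+ n.+1.
Proof. by rewrite !gS; ring. Qed.

Lemma gNN n a b : g n (- a) (- b) = (-1) ^+ n.+1 * g n a b.
Proof.
elim: n => [|n IHn]; first by rewrite !g0 mulr0.
rewrite !gS IHn [(- b) ^+ _]exprNn !exprS.
move: ((-1) ^+ n) (g n a b) (b ^+ n) => s G B; ring.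
Qed.

Lemma gNN_even n a b : ~~ odd n -> g n (- a) (- b) = - g n a b.
Proof. by move=> ev; rewrite gNN exprS -signr_odd (negbTE ev) mulr1 mulN1r. Qed.

Lemma g_closed_form n a w :
  g n a w * (w - a) ^+ 2 = n%:R * w ^+ n.+1 - n.+1%:R * w ^+ n * a + a ^+ n.+1.
Proof.
elim: n => [|n IHn]; first by rewrite g0 !expr0 expr1; ring.
rewrite gS mulrDl -mulrA IHn !exprS; ring.
Qed.

Lemma g_lt0 n a b : ~~ odd n -> (0 < n)%N -> 0 < a -> a <= b -> g n a (- b) < 0.
Proof.
move=> ev n_gt0 a_gt0 ab.
have b_gt0 : 0 < b := lt_le_trans a_gt0 ab.
have sq_gt0 : 0 < (- b - a) ^+ 2 by rewrite exprn_even_gt0 //; lra.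
rewrite -(pmulr_llt0 _ sq_gt0) g_closed_form.
have bn_even : (- b) ^+ n = b ^+ n by rewrite exprNn -signr_odd (negbTE ev) mul1r.
rewrite exprSr bn_even.
have bn_gt0 : 0 < b ^+ n := exprn_gt0 n b_gt0.
have an_le : a ^+ n <= b ^+ n by rewrite lerXn2r // nnegrE ltW.
have an1_le : a ^+ n.+1 <= b ^+ n * a by rewrite exprSr ler_wpM2r // ltW.
have nbb_gt0 : 0 < n%:R * (b ^+ n * b) by rewrite !mulr_gt0 // ltr0n.
have nba_ge0 : 0 <= n%:R * b ^+ n * a by rewrite !mulr_ge0 // ltW.
rewrite -natr1 mulrN; lra.
Qed.

Definition expansion_sum1 (N n : nat) u w :=
  \sum_(1 <= i < N.+1) u ^+ (2 * i) * w ^+ (n - 1 - 2 * i).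

Definition expansion_sum2 (N n : nat) u w :=
  \sum_(0 <= i < N.+1) (n - 1 - 2 * i)%:R * u ^+ (2 * i) * w ^+ (n - 2 - 2 * i).

Lemma expansion_sum1S N n u w :
  expansion_sum1 N.+1 n.+2 u w = u ^+ 2 * w ^+ (n - 1) + u ^+ 2 * expansion_sum1 N n u w.
Proof.
rewrite /expansion_sum1 big_nat_recl // mulr_sumr; congr (_ + _).
apply: eq_bigr => i _; rewrite mulrA -exprD; congr (_ ^+ _ * _ ^+ _); lia.
Qed.

Lemma expansion_sum2S N n u w :
  expansion_sum2 N.+1 n.+2 u w = n.+1%:R * w ^+ n + u ^+ 2 * expansion_sum2 N n u w.
Proof.
rewrite /expansion_sum2 big_nat_recl // muln0 !subn0 expr0 mulr1 mulr_sumr.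
congr (_ + _); first by rewrite !subSS !subn0.
apply: eq_bigr => i _.
transitivity ((n - 1 - 2 * i)%:R * u ^+ (2 + 2 * i) * w ^+ (n - 2 - 2 * i)).
  by congr (_%:R * _ ^+ _ * _ ^+ _); lia.
by rewrite exprD; ring.
Qed.

(* The expansion already holds for n = 4, which is the base of the induction. *)
Lemma g_expansion N n u w : n = (N.*2 + 4)%N ->
  g n u w = (u ^+ (n - 1) + w ^+ (n - 1)) + 2%:R * u ^+ (n - 2) * w
            + expansion_sum1 N n u w + (u + w) * expansion_sum2 N n u w.
Proof.
elim: N n => [|N IHN] n ->.
  rewrite /expansion_sum1 /expansion_sum2 big_geq // big_nat1 !gS g0 /=.
  rewrite (_ : 0.*2 + 4 - 1 = 3)%N // (_ : 0.*2 + 4 - 2 = 2)%N // muln0 !subn0.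
  ring.
rewrite doubleS !addSn gSS (IHN _ erefl) expansion_sum1S expansion_sum2S.
set p := (N.*2 + 2)%N; have -> : (N.*2 + 4 = p.+2)%N by lia.
have -> : (p.+4 - 1 = p.+3)%N by lia.
have -> : (p.+4 - 2 = p.+2)%N by lia.
have -> : (p.+2 - 1 = p.+1)%N by lia.
rewrite subSS subSS subn0 !exprS; ring.
Qed.
End GExpansion.

Lemma even_sub_halfK m n :
  ~~ odd m -> ~~ odd n -> (m <= n)%N -> n = (((n - m)./2).*2 + m)%N.
Proof.
move=> ev_m ev_n le_mn; have := odd_double_half (n - m).
by rewrite oddB // (negbTE ev_m) (negbTE ev_n) /=; lia.
Qed.

Section PhiMonotone.
Context {R : realType} {beta k u0 : R}.
Local Notation P := (Phi beta k u0).
Implicit Types a b u x : R.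

Definition Phi' x := beta * (x * (k - x) * (x - u0)).

(* Simpson's rule, exact here because Phi' is a cubic. *)
Lemma Phi_simpson a b :
  P b - P a = (b - a) / 6%:R * (Phi' a + 4%:R * Phi' ((a + b) / 2%:R) + Phi' b).
Proof. by rewrite /Phi /Phi'; field. Qed.

Lemma Phi_sub_PhiN u : P u - P (- u) = beta * 2%:R * (k + u0) / 3%:R * u ^+ 3.
Proof. by rewrite /Phi; field. Qed.

Hypotheses (beta_gt0 : 0 < beta) (k_gt0 : 0 < k) (u0_lt0 : u0 < 0).

Lemma Phi'_ge0 x : 0 <= x <= k -> 0 <= Phi' x.
Proof.
move=> /andP[x_ge0 x_le]; have u0_le_x : u0 <= x := le_trans (ltW u0_lt0) x_ge0.
by rewrite /Phi' !mulr_ge0 ?subr_ge0 // ltW.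
Qed.

Lemma Phi'_gt0 x : 0 < x < k -> 0 < Phi' x.
Proof.
move=> /andP[x_gt0 x_lt]; have u0_lt_x : u0 < x := lt_trans u0_lt0 x_gt0.
by rewrite /Phi' !mulr_gt0 ?subr_gt0.
Qed.

Lemma Phi'_le0 x : u0 <= x <= 0 -> Phi' x <= 0.
Proof.
move=> /andP[x_ge x_le0]; have x_lt_k : x < k := le_lt_trans x_le0 k_gt0.
by rewrite /Phi' pmulr_rle0 // mulr_le0_ge0 ?subr_ge0 // mulr_le0_ge0 ?subr_ge0 // ltW.
Qed.

Lemma Phi'_lt0 x : u0 < x < 0 -> Phi' x < 0.
Proof.
move=> /andP[x_gt x_lt0]; have x_lt_k : x < k := lt_trans x_lt0 k_gt0.
by rewrite /Phi' pmulr_rlt0 // pmulr_llt0 ?subr_gt0 // nmulr_rlt0 ?subr_gt0.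
Qed.

Lemma Phi_increasing : {in `[0, k] &, {homo P : x y / x < y}}.
Proof.
move=> a b; rewrite !in_itv /= => /andP[a_ge0 a_le] /andP[b_ge0 b_le] ab.
rewrite -subr_gt0 Phi_simpson mulr_gt0 ?divr_gt0 ?subr_gt0 //.
have := Phi'_ge0 a; have := Phi'_ge0 b; have := Phi'_gt0 ((a + b) / 2%:R).
rewrite a_ge0 a_le b_ge0 b_le; lra.
Qed.

Lemma Phi_decreasing : {in `[u0, 0] &, {homo P : x y /~ x < y}}.
Proof.
move=> a b; rewrite !in_itv /= => /andP[a_ge a_le0] /andP[b_ge b_le0] ab.
rewrite -subr_lt0 Phi_simpson pmulr_rlt0 ?divr_gt0 ?subr_gt0 //.
have := Phi'_le0 a; have := Phi'_le0 b; have := Phi'_lt0 ((b + a) / 2%:R).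
rewrite a_ge a_le0 b_ge b_le0; lra.
Qed.

Lemma PhiN_lt_Phi u : 0 < k + u0 -> 0 < u -> P (- u) < P u.
Proof.
move=> ku0_gt0 u_gt0; rewrite -subr_gt0 Phi_sub_PhiN.
by rewrite !mulr_gt0 ?invr_gt0 ?exprn_gt0 ?ltr0n.
Qed.

Lemma Phi_lt_PhiN u : k + u0 < 0 -> 0 < u -> P u < P (- u).
Proof.
move=> ku0_lt0 u_gt0; rewrite -subr_lt0 Phi_sub_PhiN.
by rewrite pmulr_llt0 ?exprn_gt0 // pmulr_llt0 ?invr_gt0 ?ltr0n // pmulr_rlt0 ?mulr_gt0.
Qed.

Lemma lt_oppu0_of_Phi_level u1 u :
  0 < k + u0 -> 0 < u1 < k -> P u1 = P u0 -> u < u1 -> u < - u0.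
Proof.
move=> ku0_gt0 /andP[u1_gt0 u1_lt] Pu1 u_lt; rewrite ltNge; apply/negP => u_ge.
have : P (- u0) < P u1.
  by apply: Phi_increasing; rewrite ?in_itv /= ?oppr_ge0 ?(ltW u0_lt0) /=; lra.
have := PhiN_lt_Phi (- u0) ku0_gt0; rewrite oppr_gt0 opprK Pu1 => /(_ u0_lt0).
lra.
Qed.

Lemma le_oppr_of_Phi_eq u w :
  0 < k + u0 -> 0 < u <= - u0 -> u0 <= w <= 0 -> P w = P u -> u <= - w.
Proof.
move=> ku0_gt0 /andP[u_gt0 u_le] w_in Pw.
rewrite lerNr -(le_nmono_in Phi_decreasing) ?in_itv //=; last lra.
by rewrite Pw ltW // PhiN_lt_Phi.
Qed.

Lemma oppr_le_of_Phi_eq u w :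
  k + u0 < 0 -> 0 < u <= - u0 -> u0 <= w <= 0 -> P w = P u -> - w <= u.
Proof.
move=> ku0_lt0 /andP[u_gt0 u_le] w_in Pw.
rewrite lerNl -(le_nmono_in Phi_decreasing) ?in_itv //=; last lra.
by rewrite Pw ltW // Phi_lt_PhiN.
Qed.

End PhiMonotone.

Theorem lemma3p6 (R : realType) :
  (forall (n : nat), ~~ odd n -> (6 <= n)%N -> forall u w : R,
     g n u w =
       (u ^+ (n - 1) + w ^+ (n - 1)) + 2%:R * u ^+ (n - 2) * w
       + \sum_(1 <= i < ((n - 4)./2).+1) u ^+ (2 * i) * w ^+ (n - 1 - 2 * i)
       + (u + w) * \sum_(0 <= i < ((n - 4)./2).+1)
                     (n - 1 - 2 * i)%:R * u ^+ (2 * i) * w ^+ (n - 2 - 2 * i))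
  /\
  (forall (beta k u0 : R), 0 < beta -> 0 < k ->
   forall (n : nat), ~~ odd n -> (2 <= n)%N ->
     (* (i) case -k < u0 < 0 *)
     ((- k < u0 < 0) ->
        forall u1 : R, 0 < u1 < k -> Phi beta k u0 u1 = Phi beta k u0 u0 ->
        forall u : R, 0 < u < u1 ->
        forall w : R, u0 < w < 0 -> Phi beta k u0 w = Phi beta k u0 u ->
          g n u w < 0)
     /\
     (* (ii) case u0 < -k *)
     (u0 < - k ->
        forall w2 : R, u0 < w2 < 0 -> Phi beta k u0 w2 = Phi beta k u0 k ->
        forall u : R, 0 < u < k ->
        forall w : R, w2 < w < 0 -> Phi beta k u0 w = Phi beta k u0 u ->
          0 < g n w u)).

Proof.
split=> [n ev n_ge6 u w | beta k u0 beta_gt0 k_gt0 n ev n_ge2].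
  by apply: (g_expansion ((n - 4)./2)); apply: even_sub_halfK => //; lia.
have n_gt0 : (0 < n)%N by lia.
split=> [/andP[u0_gt u0_lt0] u1 u1_in Pu1 u /andP[u_gt0 u_lt] w /andP[w_gt w_lt0] Pw
        | u0_lt w2 /andP[w2_gt _] _ u /andP[u_gt0 u_lt] w /andP[w_gt w_lt0] Pw].
- have ku0_gt0 : 0 < k + u0 by lra.
  have u_lt' := lt_oppu0_of_Phi_level beta_gt0 u0_lt0 _ _ ku0_gt0 u1_in Pu1 u_lt.
  rewrite -[w]opprK; apply: g_lt0 => //.
  by apply: (le_oppr_of_Phi_eq beta_gt0 k_gt0 _ _ ku0_gt0) => //; lra.
- have ku0_lt0 : k + u0 < 0 by lra.
  rewrite -[w]opprK -[u]opprK gNN_even // oppr_gt0; apply: g_lt0 => //; first lra.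
  by apply: (oppr_le_of_Phi_eq beta_gt0 k_gt0 _ _ ku0_lt0) => //; lra.
Qed.
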